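(* Let $G=(N,A)$ be an $s$-$t$ directed graph and let $u,v\in N$. Suppose that $u$ $s$-dominates $v$ and that $v$ does not $t$-dominate $u$. Then every node $w$ that is $t$-dominated by $v$ is strictly $s$-dominated by $u$.
   Context: An $s$-$t$ directed graph is a directed graph (not necessarily acyclic) with a unique source $s$ and a unique sink $t$ such that every node is reachable from $s$ and every node reaches $t$. A node $a$ $s$-dominates $b$ if every $s$-$b$ path contains $a$ (every node $s$-dominates itself); $a$ strictly $s$-dominates $b$ if moreover $a\neq b$. A node $a$ $t$-dominates $b$ (equivalently, $b$ is $t$-dominated by $a$) if every $b$-$t$ path contains $a$. *)

From mathcomp Require Import all_boot.
Set Implicit Arguments. Unset Strict Implicit. Unset Printing Implicit Defensive.

(* A path from x is encoded as x :: p with path e x p (arcs between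
   consecutive nodes); it ends at last x p; its node set is x :: p. *)

(* s-t directed graph: s is a source (no incoming arc), t is a sink
   (no outgoing arc), every node is reachable from s and reaches t.
   (Uniqueness of the source/sink follows from the reachability conditions.) *)
Definition st_graph (T : finType) (e : rel T) (s t : T) : Prop :=
  [/\ forall x, ~~ e x s,
      forall x, ~~ e t x,
      forall x, connect e s x
    & forall x, connect e x t].

Definition sdom (T : finType) (e : rel T) (s a b : T) : Prop :=
  forall p : seq T, path e s p -> last s p = b -> a \in s :: p.

Definition tdom (T : finType) (e : rel T) (t a b : T) : Prop :=
  forall p : seq T, path e b p -> last b p = t -> a \in b :: p.

From mathcomp Require Import all_boot.
From Stdlib Require Import Classical.
Set Implicit Arguments. Unset Strict Implicit. Unset Printing Implicit Defensive.

(* Since v does not t-dominate u, some u-t path q avoids v. Follow a w-t path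
   from w until it first meets u or v. If it meets u first, continuing along q
   gives a w-t path avoiding v, against v t-dominating w. If it meets v first,
   an s-w path avoiding u followed by this w-v segment would be an s-v path
   avoiding u, against u s-dominating v. *)

Section AvoidingPaths.

Variables (T : finType) (e : rel T).

Definition path_avoiding (a x y : T) : Prop :=
  exists p, [/\ path e x p, last x p = y & a \notin x :: p].

Lemma sdomP (s a b : T) : sdom e s a b <-> ~ path_avoiding a s b.
Proof.
split=> [dom [p [pp lp ap]]|nav p pp lp]; first by rewrite dom in ap.
by apply/negPn/negP => ap; apply: nav; exists p.
Qed.

Lemma tdomP (t a b : T) : tdom e t a b <-> ~ path_avoiding a b t.
Proof.
split=> [dom [p [pp lp ap]]|nav p pp lp]; first by rewrite dom in ap.
by apply/negPn/negP => ap; apply: nav; exists p.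
Qed.

Lemma path_avoiding_cons (a x y z : T) :
  e x y -> x != a -> path_avoiding a y z -> path_avoiding a x z.
Proof.
move=> exy xa [p [pp lp ap]]; exists (y :: p).
by rewrite /= exy pp lp inE negb_or eq_sym xa.
Qed.

Lemma path_avoiding_cat (a x y z : T) :
  path_avoiding a x y -> path_avoiding a y z -> path_avoiding a x z.
Proof.
move=> [p [pp lp ap]] [q [pq lq aq]]; exists (p ++ q).
rewrite cat_path pp lp pq last_cat lp lq -cat_cons mem_cat negb_or ap /=.
by move: aq; rewrite inE negb_or => /andP[].
Qed.

Lemma path_avoiding_reroute (t u v x : T) (r : seq T) :
  path_avoiding v u t -> path e x r -> last x r = t ->
  path_avoiding u x v \/ path_avoiding v x t.
Proof.
move=> avq; elim: r x => [|y r IH] x /= pr lr;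
  (case: (eqVneq x u) => [->|xu]; first by right);
  (case: (eqVneq x v) => [<-|xv]; first by left; exists [::]; rewrite /= inE eq_sym).
  by right; exists [::]; rewrite /= inE eq_sym xv lr.
case/andP: pr => exy pr; case: (IH y pr lr) => av; [left|right].
- exact: path_avoiding_cons exy xu av.
- exact: path_avoiding_cons exy xv av.
Qed.

End AvoidingPaths.

Theorem lemma8 (T : finType) (e : rel T) (s t u v : T) :
  st_graph e s t ->
  sdom e s u v ->
  ~ tdom e t v u ->
  forall w : T, tdom e t v w -> sdom e s u w /\ u <> w.
Proof.
move=> [_ _ _ reach] /sdomP suv ntvu w /tdomP tvw.
have avq : path_avoiding e v u t by apply: NNPP; rewrite -tdomP.
split; last by move=> uw; apply: ntvu; apply/tdomP; rewrite uw.
apply/sdomP => avp; have /connectP[r pr lr] := reach w.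
case: (path_avoiding_reroute avq pr (esym lr)) => [avr|//].
exact/suv/(path_avoiding_cat avp avr).
Qed.
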